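(* Let $\alpha,\beta,\gamma,x$ be non-negative integers with $(\alpha,\beta,\gamma,x)\neq(0,0,0,0)$. Then for every integer $n\ge0$, $$T_{n+1}^{1,x}(\alpha,\beta,\gamma)=\gamma\,T_n^{1,x}(\alpha,\beta,\gamma-\alpha)+x\beta\sum_{k=0}^{n}\binom{n}{k}T_{n-k}^{1,x}(\alpha,\beta,\gamma)\,T_k^{1,x}(\alpha,\beta,\beta-\alpha).$$
   Context: For complex numbers $c,\alpha$ and an integer $n\ge 0$ let $(c|\alpha)_n=\prod_{i=0}^{n-1}(c-i\alpha)$, with $(c|\alpha)_0=1$. Let $E_{\alpha,c}(t)=\sum_{n\ge 0}(c|\alpha)_n\,t^n/n!$, viewed as a formal power series in $t$. It equals $(1+\alpha t)^{c/\alpha}$ if $\alpha\neq0$ and $e^{ct}$ if $\alpha=0$. For complex $\alpha,\beta,\gamma,x$ and a non-negative integer $\lambda$, the numbers $T_n^{\lambda,x}(\alpha,\beta,\gamma)$, $n\ge0$, are defined by the formal power series identity $$\sum_{n\ge0}T_n^{\lambda,x}(\alpha,\beta,\gamma)\frac{t^n}{n!}=E_{\alpha,\gamma}(t)\,\bigl(1-x(E_{\alpha,\beta}(t)-1)\bigr)^{-\lambda}.$$ The third argument may be any complex number, e.g. $\gamma-\alpha$ or $\beta-\alpha$. *)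

From HB Require Import structures.
From mathcomp Require Import all_boot all_order all_algebra all_field.
Set Implicit Arguments. Unset Strict Implicit. Unset Printing Implicit Defensive.
Import Order.TTheory GRing.Theory Num.Theory.
Local Open Scope ring_scope.

Definition fps := nat -> algC.

Definition fps_one : fps := fun n => (n == 0%N)%:R.

Definition fps_mul (f g : fps) : fps :=
  fun n => \sum_(i < n.+1) f i * g (n - i)%N.

Definition fps_pow (f : fps) (m : nat) : fps := iter m (fps_mul f) fps_one.

(* For h with h 0 = 0, (1 - h)^{-1} = sum_{m>=0} h^m; the coefficient of t^n
   only involves m <= n. *)
Definition fps_geom (h : fps) : fps :=
  fun n => \sum_(m < n.+1) fps_pow h m n.

Definition gfall (c a : algC) (n : nat) : algC := \prod_(i < n) (c - i%:R * a).

Definition Eser (a c : algC) : fps := fun n => gfall c a n / n`!%:R.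

(* Generating function E_{a,g}(t) (1 - x (E_{a,b}(t) - 1))^{-lam} *)
Definition Tgf (lam : nat) (x a b g : algC) : fps :=
  fps_mul (Eser a g)
    (fps_pow (fps_geom (fun n => x * (Eser a b n - fps_one n))) lam).

Definition T (lam : nat) (x : algC) (n : nat) (a b g : algC) : algC :=
  n`!%:R * Tgf lam x a b g n.

From HB Require Import structures.
From mathcomp Require Import all_boot all_order all_algebra all_field.
From mathcomp Require Import ring zify.
From Stdlib Require Import FunctionalExtensionality.
Import Order.TTheory GRing.Theory Num.Theory.
Local Open Scope ring_scope.

(* Write G = (1 - h)^{-1} with h = x (E_{a,b} - 1), and
   P_c = E_{a,c} G, so that T_n^{1,x}(a,b,c) = n! [t^n] P_c.  Differentiating,
     P_c' = E_{a,c}' G + E_{a,c} G' = c P_{c-a} + x b P_{b-a} P_c,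
   because E_{a,c}' = c E_{a,c-a} and G' = G h' G with h' = x b E_{a,b-a}.
   Taking n! [t^n] of both sides turns the product into a binomial
   convolution, which is the recurrence. *)

Definition fps_trunc (N : nat) (f : fps) : {poly algC} := \poly_(i < N) f i.

Lemma coef_fps_trunc N f i : (i < N)%N -> (fps_trunc N f)`_i = f i.
Proof. by move=> lt_iN; rewrite coef_poly lt_iN. Qed.

Lemma fps_mul_coef (f g : fps) (p q : {poly algC}) n :
  (forall i, (i <= n)%N -> p`_i = f i) ->
  (forall i, (i <= n)%N -> q`_i = g i) ->
  fps_mul f g n = (p * q)`_n.
Proof.
move=> pf qg; rewrite coefM; apply: eq_bigr => i _.
by rewrite pf ?qg ?leq_subr // -ltnS.
Qed.

Lemma fps_mul_trunc {N n : nat} (f g : fps) :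
  (n < N)%N -> fps_mul f g n = (fps_trunc N f * fps_trunc N g)`_n.
Proof.
move=> lt_nN.
by apply: fps_mul_coef => i le_in; apply: coef_fps_trunc; exact: leq_ltn_trans le_in lt_nN.
Qed.

Lemma fps_mulC f g : fps_mul f g = fps_mul g f.
Proof.
by apply: functional_extensionality => n; rewrite !(fps_mul_trunc _ _ (ltnSn n)) mulrC.
Qed.

Lemma fps_mulA f g h : fps_mul (fps_mul f g) h = fps_mul f (fps_mul g h).
Proof.
apply: functional_extensionality => n.
have agree (u v : fps) i :
    (i <= n)%N -> (fps_trunc n.+1 u * fps_trunc n.+1 v)`_i = fps_mul u v i.
  by move=> le_in; rewrite (fps_mul_trunc _ _ (leq_ltn_trans le_in (ltnSn n))).
transitivity ((fps_trunc n.+1 f * fps_trunc n.+1 g * fps_trunc n.+1 h)`_n).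
  by apply: fps_mul_coef => i le_in; [exact: agree | exact: coef_fps_trunc].
rewrite -mulrA; symmetry.
by apply: fps_mul_coef => i le_in; [exact: coef_fps_trunc | exact: agree].
Qed.

Lemma fps_mul1 f : fps_mul f fps_one = f.
Proof.
apply: functional_extensionality => n.
rewrite (@fps_mul_coef _ _ (fps_trunc n.+1 f) 1) ?mulr1 ?coef_fps_trunc // => i le_in;
  [exact: coef_fps_trunc | exact: coef1].
Qed.

Lemma fps_mul1l f : fps_mul fps_one f = f.
Proof. by rewrite fps_mulC fps_mul1. Qed.

Lemma fps_mulDr (f g h : fps) n :
  fps_mul f (fun m => g m + h m) n = fps_mul f g n + fps_mul f h n.
Proof. by rewrite /fps_mul -big_split; apply: eq_bigr => i _; rewrite mulrDr. Qed.

Lemma fps_mulBl (f g h : fps) n :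
  fps_mul (fun m => f m - g m) h n = fps_mul f h n - fps_mul g h n.
Proof. by rewrite /fps_mul -sumrB; apply: eq_bigr => i _; rewrite mulrBl. Qed.

Lemma fps_mulZl (c : algC) (f g : fps) :
  fps_mul (fun m => c * f m) g = (fun m => c * fps_mul f g m).
Proof.
apply: functional_extensionality => n.
by rewrite /fps_mul mulr_sumr; apply: eq_bigr => i _; rewrite mulrA.
Qed.

Lemma fps_mulZr (c : algC) (f g : fps) :
  fps_mul f (fun m => c * g m) = (fun m => c * fps_mul f g m).
Proof. by rewrite fps_mulC fps_mulZl fps_mulC. Qed.

Definition fps_deriv (f : fps) : fps := fun n => n.+1%:R * f n.+1.

Lemma coef_deriv_trunc N f i :
  (i < N)%N -> (fps_trunc N.+1 f)^`()`_i = fps_deriv f i.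
Proof. by move=> lt_iN; rewrite coef_deriv coef_fps_trunc ?ltnS // -mulr_natl. Qed.

(* Leibniz rule, inherited from derivM on polynomials. *)
Lemma fps_deriv_mul f g n :
  fps_deriv (fps_mul f g) n = fps_mul (fps_deriv f) g n + fps_mul f (fps_deriv g) n.
Proof.
rewrite {1}/fps_deriv (fps_mul_trunc _ _ (ltnSn n.+1)) mulr_natl.
rewrite -(coef_deriv (fps_trunc n.+2 f * fps_trunc n.+2 g)).
have lt_in i : (i <= n)%N -> (i < n.+2)%N by move=> le_in; rewrite ltnS leqW.
rewrite derivM coefD; congr (_ + _); symmetry; apply: fps_mul_coef => i le_in;
  by rewrite (coef_deriv_trunc, coef_fps_trunc) ?lt_in.
Qed.

(* E_{a,c}' = c E_{a,c-a}, since (c|a)_{n+1} = c (c-a|a)_n. *)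
Lemma fps_deriv_Eser (a c : algC) :
  fps_deriv (Eser a c) = (fun n => c * Eser a (c - a) n).
Proof.
apply: functional_extensionality => n.
rewrite /fps_deriv /Eser /gfall big_ord_recl /= factS natrM.
have -> : \prod_(i < n) (c - (bump 0 i)%:R * a) = \prod_(i < n) (c - a - i%:R * a).
  by apply: eq_bigr => i _; rewrite /bump /= add1n -addn1 natrD; ring.
have nz_Sn : (n.+1%:R : algC) != 0 by rewrite pnatr_eq0.
have nz_fact : (n`!%:R : algC) != 0 by rewrite pnatr_eq0 -lt0n fact_gt0.
by field; rewrite nz_fact -(natrD _ 1 n) add1n nz_Sn.
Qed.

Section GeometricSeries.
Variable h : fps.
Hypothesis h0 : h 0%N = 0.

Lemma fps_pow_vanish m n : (n < m)%N -> fps_pow h m n = 0.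
Proof.
elim: m n => [//|m IHm] n lt_nm /=.
rewrite /fps_mul; apply: big1 => i _.
case: (posnP (nat_of_ord i)) => [-> | i_gt0]; first by rewrite h0 mul0r.
by rewrite IHm ?mulr0 //; have := ltn_ord i; lia.
Qed.

Lemma fps_geom_wide {k N : nat} : (k < N)%N -> \sum_(m < N) fps_pow h m k = fps_geom h k.
Proof.
move=> lt_kN; rewrite /fps_geom -!(big_mkord xpredT (fun m => fps_pow h m k)).
rewrite (big_cat_nat _ (n := k.+1)) //= [X in _ + X]big1_seq ?addr0 // => m.
by rewrite mem_index_iota => /andP[_ /andP[lt_km _]]; rewrite fps_pow_vanish.
Qed.

Lemma fps_geom_fix n : fps_geom h n = fps_one n + fps_mul h (fps_geom h) n.
Proof.
rewrite -(@fps_geom_wide n n.+2 (leqnSn n.+1)) big_ord_recl /=; congr (_ + _).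
rewrite /fps_mul.
under [RHS]eq_bigr => i _ do
  rewrite -(@fps_geom_wide (n - i) n.+1 (leq_subr i n)) mulr_sumr.
by rewrite [RHS]exchange_big.
Qed.

(* G' = G h' G, obtained from G' = h' G + h G' and (1 - h) G = 1. *)
Lemma fps_deriv_geom :
  fps_deriv (fps_geom h) = fps_mul (fps_geom h) (fps_mul (fps_deriv h) (fps_geom h)).
Proof.
apply: functional_extensionality => n.
set G := fps_geom h.
have hG : fps_mul h G = (fun m => G m - fps_one m).
  by apply: functional_extensionality => m; rewrite /G (fps_geom_fix m) addrAC subrr add0r.
have DG : fps_deriv G = (fun m => fps_mul (fps_deriv h) G m + fps_mul h (fps_deriv G) m).
  apply: functional_extensionality => m.
  by rewrite -fps_deriv_mul {1}/fps_deriv /G fps_geom_fix /fps_one /= mulrDr mulr0 add0r.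
have expand : fps_mul G (fps_deriv G) n =
    fps_mul G (fps_mul (fps_deriv h) G) n + fps_mul G (fps_deriv G) n - fps_deriv G n.
  rewrite {1}DG fps_mulDr -[fps_mul G (fps_mul h _)]fps_mulA [fps_mul G h]fps_mulC.
  by rewrite hG fps_mulBl fps_mul1l addrA.
by apply: (addrI (fps_mul G (fps_deriv G) n)); rewrite {1}expand subrK addrC.
Qed.
End GeometricSeries.

Lemma fact_fps_mul (f g : fps) n :
  n`!%:R * fps_mul f g n =
  \sum_(k < n.+1) 'C(n, k)%:R * (k`!%:R * f k) * ((n - k)`!%:R * g (n - k)%N).
Proof.
rewrite /fps_mul mulr_sumr; apply: eq_bigr => k _.
have le_kn : (k <= n)%N by rewrite -ltnS.
by rewrite -(bin_fact le_kn) !natrM; ring.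
Qed.

Lemma T1_rec (x a b c : algC) n :
  T 1 x n.+1 a b c = c * T 1 x n a b (c - a)
    + x * b * \sum_(k < n.+1) 'C(n, k)%:R * T 1 x (n - k)%N a b c * T 1 x k a b (b - a).
Proof.
pose h : fps := fun m => x * (Eser a b m - fps_one m).
pose G := fps_geom h.
pose P c := fps_mul (Eser a c) G.
have h0 : h 0%N = 0.
  by rewrite /h /Eser /gfall big_ord0 fact0 divr1 subrr mulr0.
have Dh : fps_deriv h = (fun m => x * b * Eser a (b - a) m).
  apply: functional_extensionality => m.
  rewrite /h /fps_deriv /fps_one /= subr0 mulrCA.
  by rewrite -[m.+1%:R * _]/(fps_deriv (Eser a b) m) fps_deriv_Eser mulrA.
have TP k c' : T 1 x k a b c' = k`!%:R * P c' k by rewrite /T /Tgf /= fps_mul1.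
have DP : fps_deriv (P c) n = c * P (c - a) n + x * b * fps_mul (P (b - a)) (P c) n.
  rewrite /P fps_deriv_mul fps_deriv_Eser fps_mulZl fps_deriv_geom // Dh.
  by rewrite fps_mulZl !fps_mulZr -fps_mulA [fps_mul (fps_mul _ G) _]fps_mulC.
transitivity (n`!%:R * fps_deriv (P c) n).
  by rewrite TP factS natrM -mulrA [in LHS]mulrCA.
rewrite DP mulrDr TP.
congr (_ + _); first ring.
rewrite mulrCA fact_fps_mul; congr (_ * _); apply: eq_bigr => k _.
by rewrite !TP; ring.
Qed.

Theorem theorem3 (a b g x : nat) (n : nat) :
  (a, b, g, x) != (0, 0, 0, 0)%N ->
  T 1 x%:R n.+1 a%:R b%:R g%:R =
    g%:R * T 1 x%:R n a%:R b%:R (g%:R - a%:R)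
    + x%:R * b%:R * \sum_(k < n.+1)
        'C(n, k)%:R * T 1 x%:R (n - k)%N a%:R b%:R g%:R
                    * T 1 x%:R k a%:R b%:R (b%:R - a%:R).
Proof. by move=> _; exact: T1_rec. Qed.
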